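(* Let $k\ge1$ and consider the Poisson mixture on $\{0,1,2,\dots\}$ $$f(x\mid\lambda,\boldsymbol\gamma,\mathbf p)=\frac{1}{x!}\sum_{i=1}^k p_i\,\lambda_i^x e^{-\lambda_i},\qquad \lambda_i=\frac{\lambda\gamma_i}{p_i},$$ where $\lambda>0$, $\mathbf p=(p_1,\dots,p_k)$ with $p_i>0$, $\sum_i p_i=1$, and $\boldsymbol\gamma=(\gamma_1,\dots,\gamma_k)$ with $\gamma_i>0$, $\sum_i\gamma_i=1$ (so that $\lambda=\sum_i p_i\lambda_i$ is the mean of the mixture). Put the prior $\lambda^{-1}\,\mathrm d\lambda\times\pi_0(\mathrm d(\boldsymbol\gamma,\mathbf p))$ where $\pi_0$ is any proper probability distribution not depending on $\lambda$. Then for any sample $x_1,\dots,x_n\in\{0,1,2,\dots\}$ containing at least one strictly positive observation, the posterior distribution is proper, i.e. $0<\int\prod_{j=1}^n f(x_j\mid\lambda,\boldsymbol\gamma,\mathbf p)\,\lambda^{-1}\mathrm d\lambda\,\pi_0(\mathrm d(\boldsymbol\gamma,\mathbf p))<\infty$.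
   Context: A posterior is proper when likelihood times prior has finite positive total integral over the parameter space. *)

From HB Require Import structures.
From mathcomp Require Import all_boot all_order all_algebra.
From mathcomp Require Import all_classical all_reals all_analysis.
Set Implicit Arguments. Unset Strict Implicit. Unset Printing Implicit Defensive.
Import Order.TTheory GRing.Theory Num.Theory.
Local Open Scope ring_scope.

Definition poisson_mix {R : realType} (k : nat) (lam : R) (gam p : 'I_k -> R)
  (x : nat) : R :=
  (x`!%:R)^-1 * \sum_(i < k)
     p i * (lam * gam i / p i) ^+ x * expR (- (lam * gam i / p i)).

Definition mix_lik {R : realType} (k : nat) (lam : R) (gam p : 'I_k -> R)
  (n : nat) (xs : 'I_n -> nat) : R :=
  \prod_(j < n) poisson_mix lam gam p (xs j).

Definition in_simplex {R : realType} (k : nat) (v : 'I_k -> R) : Prop :=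
  (forall i, 0 < v i) /\ \sum_(i < k) v i = 1.

From HB Require Import structures.
From mathcomp Require Import all_boot all_order all_algebra.
From mathcomp Require Import all_classical all_reals all_analysis.
From mathcomp Require Import measurable_realfun exponential_distribution.
From mathcomp Require Import ring lra.
Import Order.TTheory GRing.Theory Num.Theory.
Local Open Scope ring_scope.
Local Open Scope classical_set_scope.

(* The inner integral over [lam] is bounded above and below by positive
   constants that do not depend on the mixture weights (gam, p); integrating
   these constants against the probability pi0 gives finiteness and
   positivity.  Each factor of the likelihood is at most 1, so it is dominated
   by the factor of a positive observation x = m+1, i.e. by a combination of
   (lam c_i)^(m+1) e^(-lam c_i), and divided by lam these are dominated by
   exponential densities.  For the lower bound, some weight p_i0 is at least
   1/k, and on lam c_i0 in [1, 2] every factor of the likelihood is at least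
   e^(-2) / (k x!). *)

Section powexpN.
Variable R : realType.
Implicit Types (u c lam : R) (x m : nat).

Definition powexpN x u : R := u ^+ x * expR (- u).

Lemma powexpN_ge0 x u : 0 <= u -> 0 <= powexpN x u.
Proof. by move=> u0; rewrite /powexpN mulr_ge0 ?exprn_ge0 ?expR_ge0. Qed.

Lemma expR_ge_pow_fact x u : 0 <= u -> u ^+ x <= x`!%:R * expR u.
Proof.
move=> u0; case: x => [|m].
  by rewrite expr0 fact0 mul1r; apply: le_trans (expR_ge1Dx u); rewrite lerDl.
have hf : 0 < (m.+1)`!%:R :> R by rewrite ltr0n fact_gt0.
rewrite -ler_pdivrMl // mulrC; apply: le_trans (expR_ge1Dxn m u0).
by rewrite lerDr.
Qed.

Lemma powexpN_le_fact x u : 0 <= u -> powexpN x u <= x`!%:R.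
Proof.
move=> u0; rewrite /powexpN.
apply: (le_trans (ler_wpM2r (expR_ge0 (- u)) (expR_ge_pow_fact x u u0))).
by rewrite -mulrA -expRD subrr expR0 mulr1.
Qed.

Lemma powexpN_ge_expRN2 x u : 1 <= u <= 2 -> expR (-2) <= powexpN x u.
Proof.
move=> /andP[u1 u2]; rewrite /powexpN -[expR (-2)]mul1r.
by apply: ler_pM; rewrite ?expR_ge0 ?exprn_ege1 // ler_expR lerN2.
Qed.

(* Split e^(-lam c) = e^(-lam c / 2) e^(-lam c / 2) and absorb (lam c)^m into
   the first half. *)
Lemma powexpNS_div_le_exponential_pdf m c lam : 0 < c -> 0 < lam ->
  powexpN m.+1 (lam * c) / lam <= 2 ^+ m.+1 * m`!%:R * exponential_pdf (c / 2) lam.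
Proof.
move=> c0 l0; rewrite exponential_pdfE; last exact: ltW.
set u := lam * c.
have u0 : 0 < u by rewrite mulr_gt0.
have -> : powexpN m.+1 u / lam = c * (u ^+ m * expR (- u)).
  by rewrite /powexpN exprS /u; field; rewrite gt_eqF.
have pow_le : u ^+ m <= 2 ^+ m * m`!%:R * expR (u / 2).
  have -> : u ^+ m = 2 ^+ m * (u / 2) ^+ m by rewrite -exprMn; congr (_ ^+ _); field.
  by rewrite -mulrA ler_wpM2l ?exprn_ge0 // expR_ge_pow_fact // divr_ge0 // ltW.
apply: le_trans (_ : c * (2 ^+ m * m`!%:R * expR (u / 2) * expR (- u)) <= _).
  by rewrite ler_wpM2l ?ler_wpM2r ?expR_ge0 // ltW.
have -> : expR (- (c / 2) * lam) = expR (u / 2) * expR (- u).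
  by rewrite -expRD /u; congr expR; field.
by rewrite exprS le_eqVlt; apply/orP; left; apply/eqP; field.
Qed.

End powexpN.
Arguments powexpN {R}.

Section simplex.
Context {R : realType} {k : nat}.
Implicit Types v gam p : 'I_k -> R.

Lemma simplex_div_gt0 gam p i : in_simplex gam -> in_simplex p -> 0 < gam i / p i.
Proof. by move=> [g0 _] [p0 _]; rewrite divr_gt0. Qed.

Lemma simplex_le1 v i : in_simplex v -> v i <= 1.
Proof.
move=> [v0 <-]; rewrite (bigD1 i) //= lerDl.
by apply: sumr_ge0 => j _; exact: ltW.
Qed.

Lemma sum1_exists_ge_invn v : (0 < k)%N -> \sum_(i < k) v i = 1 ->
  exists i, k%:R^-1 <= v i.
Proof.
move=> k0 v1; apply: contrapT => /forallNP small.
have : \sum_(i < k) v i < \sum_(i < k) k%:R^-1.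
  apply: ltr_sum; first by apply/hasP; exists (Ordinal k0); rewrite ?mem_index_enum.
  by move=> i _; rewrite ltNge; apply/negP => /small.
rewrite v1 sumr_const card_ord -[_ *+ _]mulr_natr mulVf ?ltxx //.
by rewrite pnatr_eq0 -lt0n.
Qed.

End simplex.

Section mixture_bounds.
Context {R : realType} {k : nat} {gam p : 'I_k -> R}.
Hypotheses (gamS : in_simplex gam) (pS : in_simplex p).
Implicit Types (lam : R) (x : nat).

Lemma poisson_mixE lam x : poisson_mix lam gam p x =
  (x`!%:R)^-1 * \sum_(i < k) p i * powexpN x (lam * gam i / p i).
Proof.
by rewrite /poisson_mix; congr (_ * _); apply: eq_bigr => i _; rewrite mulrA.
Qed.

Lemma mix_arg_ge0 lam i : 0 <= lam -> 0 <= lam * gam i / p i.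
Proof. by move=> l0; rewrite -mulrA mulr_ge0 // ltW // simplex_div_gt0. Qed.

Lemma mix_term_ge0 lam x i : 0 <= lam -> 0 <= p i * powexpN x (lam * gam i / p i).
Proof.
move=> l0; rewrite mulr_ge0 ?powexpN_ge0 ?mix_arg_ge0 //.
by case: pS => p0 _; rewrite ltW.
Qed.

Lemma poisson_mix_ge0 lam x : 0 <= lam -> 0 <= poisson_mix lam gam p x.
Proof.
move=> l0; rewrite poisson_mixE mulr_ge0 ?invr_ge0 ?ler0n //.
by apply: sumr_ge0 => i _; exact: mix_term_ge0.
Qed.

Lemma poisson_mix_le1 lam x : 0 <= lam -> poisson_mix lam gam p x <= 1.
Proof.
move=> l0; rewrite poisson_mixE ler_pdivrMl ?ltr0n ?fact_gt0 // mulr1.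
apply: le_trans (_ : \sum_(i < k) p i * x`!%:R <= _).
  apply: ler_sum => i _; apply: ler_wpM2l; first by case: pS => p0 _; rewrite ltW.
  by rewrite powexpN_le_fact ?mix_arg_ge0.
by rewrite -mulr_suml; case: pS => _ ->; rewrite mul1r.
Qed.

Lemma mix_lik_ge0 lam n (xs : 'I_n -> nat) : 0 <= lam -> 0 <= mix_lik lam gam p xs.
Proof. by move=> l0; apply: prodr_ge0 => j _; exact: poisson_mix_ge0. Qed.

Lemma mix_lik_le_poisson_mix lam n (xs : 'I_n -> nat) j : 0 <= lam ->
  mix_lik lam gam p xs <= poisson_mix lam gam p (xs j).
Proof.
move=> l0; rewrite /mix_lik (bigD1 j) //= -[leRHS]mulr1.
rewrite ler_wpM2l ?poisson_mix_ge0 //.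
by apply: prodr_ile1 => i _; rewrite poisson_mix_ge0 ?poisson_mix_le1.
Qed.

Lemma mix_lik_div_le n (xs : 'I_n -> nat) j m lam : xs j = m.+1 -> 0 < lam ->
  mix_lik lam gam p xs / lam <=
  2 ^+ m.+1 * m`!%:R * \sum_(i < k) exponential_pdf (gam i / p i / 2) lam.
Proof.
move=> xj l0; have l0W := ltW l0; have il0 : 0 <= lam^-1 by rewrite invr_ge0.
apply: le_trans (_ : poisson_mix lam gam p (xs j) / lam <= _).
  by rewrite ler_wpM2r // mix_lik_le_poisson_mix.
rewrite poisson_mixE xj -[_ * _ / lam]mulrA; set S := (X in _ * X <= _).
have S0 : 0 <= S by rewrite mulr_ge0 // sumr_ge0 // => i _; exact: mix_term_ge0.
apply: le_trans (_ : S <= _).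
  by rewrite -[leRHS]mul1r ler_wpM2r // invf_le1 ?ltr0n ?fact_gt0 // ler1n fact_gt0.
rewrite /S mulr_suml mulr_sumr; apply: ler_sum => i _.
apply: le_trans (_ : powexpN m.+1 (lam * (gam i / p i)) / lam <= _).
  rewrite mulrA ler_wpM2r // -[leRHS]mul1r ler_wpM2r ?simplex_le1 //.
  by rewrite powexpN_ge0 ?mix_arg_ge0.
by apply: powexpNS_div_le_exponential_pdf => //; exact: simplex_div_gt0.
Qed.

Lemma poisson_mix_ge lam x i : 0 <= lam -> k%:R^-1 <= p i ->
  1 <= lam * (gam i / p i) <= 2 ->
  (x`!%:R)^-1 * (k%:R^-1 * expR (-2)) <= poisson_mix lam gam p x.
Proof.
move=> l0 pi_ge hu; rewrite poisson_mixE ler_wpM2l ?invr_ge0 ?ler0n //.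
rewrite (bigD1 i) //=; apply: le_trans (_ : p i * powexpN x (lam * gam i / p i) <= _).
  by rewrite ler_pM ?invr_ge0 ?ler0n ?expR_ge0 ?powexpN_ge_expRN2 -?mulrA.
by rewrite lerDl sumr_ge0 // => j _; exact: mix_term_ge0.
Qed.

Lemma mix_lik_ge n (xs : 'I_n -> nat) lam i : 0 <= lam -> k%:R^-1 <= p i ->
  1 <= lam * (gam i / p i) <= 2 ->
  \prod_(j < n) ((xs j)`!%:R^-1 * (k%:R^-1 * expR (-2))) <= mix_lik lam gam p xs.
Proof.
move=> l0 pi_ge hu; apply: ler_prod => j _.
rewrite (poisson_mix_ge _ _ _ l0 pi_ge hu) andbT.
by rewrite mulr_ge0 ?invr_ge0 ?ler0n ?mulr_ge0 ?expR_ge0.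
Qed.

End mixture_bounds.

Section inner_integral.
Variables (R : realType) (k : nat).
Context {n : nat}.
Variable xs : 'I_n -> nat.
Local Notation mu := (@lebesgue_measure R).
Local Notation inner gam p :=
  (\int[mu]_(lam in `]0%R, +oo[%classic) (mix_lik lam gam p xs / lam)%:E)%E.

Lemma measurable_mix_lik (gam p : 'I_k -> R) :
  measurable_fun setT (fun lam : R => mix_lik lam gam p xs).
Proof.
have lin i : measurable_fun setT (fun lam : R => lam * gam i / p i).
  by apply: measurable_funM => //; apply: measurable_funM.
apply: measurable_prod => j _; apply: measurable_funM => //.
apply: measurable_sum => i; apply: measurable_funM.
  by apply: measurable_funM => //; exact: measurable_funX.
by apply: measurableT_comp; [exact: measurable_expR | exact: measurable_funN].
Qed.

Lemma measurable_inv_pos :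
  measurable_fun (`]0%R, +oo[%classic : set R) (fun lam : R => lam^-1).
Proof.
apply: open_continuous_measurable_fun; first exact: interval_open.
move=> x; rewrite inE /= in_itv /= andbT => x0.
by apply: inv_continuous; rewrite gt_eqF.
Qed.

Lemma measurable_mix_lik_div (gam p : 'I_k -> R) :
  measurable_fun (`]0%R, +oo[%classic : set R)
    (fun lam : R => (mix_lik lam gam p xs / lam)%:E).
Proof.
apply/measurable_EFinP; apply: measurable_funM; last exact: measurable_inv_pos.
by apply: measurable_funTS; exact: measurable_mix_lik.
Qed.

Lemma mix_lik_div_ge0 (gam p : 'I_k -> R) : in_simplex gam -> in_simplex p ->
  forall lam, `]0%R, +oo[%classic lam -> (0 <= (mix_lik lam gam p xs / lam)%:E)%E.
Proof.
move=> gS pS lam; rewrite /= in_itv /= andbT => l0.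
by rewrite lee_fin mulr_ge0 ?mix_lik_ge0 ?invr_ge0 ?ltW.
Qed.

Lemma integral_mix_lik_div_ub : (exists j, 0 < xs j)%N ->
  exists2 C : R, 0 <= C & forall gam p : 'I_k -> R,
    in_simplex gam -> in_simplex p -> (inner gam p <= C%:E)%E.
Proof.
move=> [j xj_gt0]; set m := (xs j).-1; have xj : xs j = m.+1 by rewrite prednK.
pose B : R := 2 ^+ m.+1 * m`!%:R; have B0 : 0 <= B by rewrite mulr_ge0 ?exprn_ge0.
exists (B * k%:R); first by rewrite mulr_ge0.
move=> gam p gS pS.
have rate_gt0 i : 0 < gam i / p i / 2 by rewrite divr_gt0 ?simplex_div_gt0.
have pdf_ge0 i (D : set R) :
  forall lam, D lam -> (0 <= (exponential_pdf (gam i / p i / 2) lam)%:E)%E.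
  by move=> lam _; rewrite lee_fin exponential_pdf_ge0 // ltW.
apply: (@le_trans _ _ (\int[mu]_(lam in `]0%R, +oo[%classic)
    (B%:E * \sum_(i < k) (exponential_pdf (gam i / p i / 2) lam)%:E))%E).
  apply: ge0_le_integral => //; first exact: mix_lik_div_ge0.
  - exact: measurable_mix_lik_div.
  - apply: emeasurable_funM => //; apply: emeasurable_sum => i.
    apply/measurable_EFinP; apply: measurable_funTS.
    exact: measurable_exponential_pdf.
  - move=> lam; rewrite /= in_itv /= andbT => l0.
    by rewrite sumEFin -EFinM lee_fin /B; exact: (mix_lik_div_le gS pS _ _ _ _ _ xj l0).
rewrite ge0_integralZl //; last 2 first.
- apply: emeasurable_sum => i; apply/measurable_EFinP; apply: measurable_funTS.
  exact: measurable_exponential_pdf.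
- by move=> lam _; apply: sume_ge0 => i _; exact: pdf_ge0.
rewrite ge0_integral_sum //; last 2 first.
- move=> i; apply/measurable_EFinP; apply: measurable_funTS.
  exact: measurable_exponential_pdf.
- by move=> i; exact: pdf_ge0.
rewrite (EFinM B) lee_wpmul2l ?lee_fin //.
apply: le_trans (_ : \sum_(i < k) 1 <= _)%E.
  apply: lee_sum => i _; rewrite -(integral_exponential_pdf (rate_gt0 i)).
  apply: ge0_subset_integral => //; last exact: pdf_ge0.
  by apply/measurable_EFinP; exact: measurable_exponential_pdf.
by rewrite sumEFin sumr_const card_ord -mulr_natr mul1r.
Qed.

Lemma integral_mix_lik_div_lb : (0 < k)%N ->
  exists2 c : R, 0 < c & forall gam p : 'I_k -> R,
    in_simplex gam -> in_simplex p -> (c%:E <= inner gam p)%E.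
Proof.
move=> k0; pose K : R := \prod_(j < n) ((xs j)`!%:R^-1 * (k%:R^-1 * expR (-2))).
have K0 : 0 < K.
  apply: prodr_gt0 => j _; rewrite mulr_gt0 ?invr_gt0 ?ltr0n ?fact_gt0 //.
  by rewrite mulr_gt0 ?expR_gt0 // invr_gt0 ltr0n.
exists (K / 2); first by rewrite divr_gt0.
move=> gam p gS pS; have [i pi_ge] := sum1_exists_ge_invn p k0 (proj2 pS).
set c := gam i / p i; have c0 : 0 < c by exact: simplex_div_gt0.
pose a := c^-1; pose b := 2 * c^-1.
have sub : `[a, b] `<=` `]0%R, +oo[%classic.
  move=> x; rewrite /= !in_itv /= andbT => /andP[+ _]; apply: lt_le_trans.
  by rewrite invr_gt0.
have restrict : (\int[mu]_(lam in `[a, b])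
    (mix_lik lam gam p xs / lam)%:E <= inner gam p)%E.
  apply: ge0_subset_integral => //; first exact: measurable_mix_lik_div.
  exact: mix_lik_div_ge0.
apply: le_trans restrict.
apply: le_trans (_ : \int[mu]_(lam in `[a, b]) (K * c / 2)%:E <= _)%E.
  rewrite integral_cst //= lebesgue_measure_itv /= lte_fin ltr_pMl ?invr_gt0 //.
  rewrite ?ltr1n // -EFinB -EFinM lee_fin le_eqVlt; apply/orP; left; apply/eqP.
  by rewrite /a /b; field; rewrite gt_eqF.
apply: ge0_le_integral => //.
- by move=> x _; rewrite lee_fin divr_ge0 // mulr_ge0 // ltW.
- exact: measurable_funS sub (measurable_mix_lik_div gam p).
- move=> x; rewrite /= in_itv /= /a /b => /andP[xl xu].
  have x0 : 0 < x by apply: lt_le_trans xl; rewrite invr_gt0.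
  have cVc : c * c^-1 = 1 by rewrite mulfV ?gt_eqF.
  have xc : 1 <= x * c <= 2 by apply/andP; split; nra.
  have c2 : 0 <= c / 2 by rewrite divr_ge0 // ltW.
  rewrite lee_fin -mulrA ler_pM ?(ltW K0) //.
    exact: (mix_lik_ge gS pS n xs x i (ltW x0) pi_ge xc).
  rewrite -(ler_pM2l x0) mulfV ?gt_eqF // mulrA ler_pdivrMr // mul1r.
  by case/andP: xc.
Qed.

End inner_integral.

Section integral_cst_bounds.
Context d (T : measurableType d) (R : realType).
Variable m : {measure set T -> \bar R}.
Local Open Scope ereal_scope.

(* Neither bound needs [f] to be measurable: both compare [f] with a constant
   simple function in the supremum defining the integral. *)
Lemma integral_ge_cst (f : T -> \bar R) (c : R) : (0 <= c)%R ->
  (forall t, c%:E <= f t) -> c%:E * m setT <= \int[m]_t f t.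
Proof.
move=> c0 cf; rewrite ge0_integralTE; last by move=> t; exact: le_trans (cf t).
apply: ereal_sup_ubound; exists (cst_nnsfun T (NngNum c0)) => //.
by rewrite -(sintegral_EFin_cst m setT (NngNum c0)) patch_setT.
Qed.

Lemma integral_le_cst (f : T -> \bar R) (C : R) : (0 <= C)%R ->
  (forall t, 0 <= f t <= C%:E) -> \int[m]_t f t <= C%:E * m setT.
Proof.
move=> C0 fC; rewrite ge0_integralTE; last by move=> t; case/andP: (fC t).
apply: ge_ereal_sup => _ [h /= hf <-].
rewrite -(sintegral_EFin_cst m setT (NngNum C0)) patch_setT.
apply: (le_sintegral m (g := cst_nnsfun T (NngNum C0))) => t /=.
by rewrite -lee_fin; apply: le_trans (hf t) _; case/andP: (fC t).
Qed.

End integral_cst_bounds.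

Theorem theorem2 (R : realType) (k : nat) (hk : (0 < k)%N)
  (d : measure_display) (T : measurableType d) (pi0 : probability T R)
  (gam p : T -> 'I_k -> R)
  (gam_meas : forall i, measurable_fun setT (fun t => gam t i))
  (p_meas : forall i, measurable_fun setT (fun t => p t i))
  (gam_simplex : forall t, in_simplex (gam t))
  (p_simplex : forall t, in_simplex (p t))
  (n : nat) (xs : 'I_n -> nat) (hpos : exists j, (0 < xs j)%N) :
  let Z := (\int[pi0]_t
              \int[lebesgue_measure]_(lam in `]0%R, +oo[%classic)
                 ((mix_lik lam (gam t) (p t) xs) / lam)%:E)%E in
  (0 < Z)%E /\ (Z < +oo)%E.
Proof.
move=> Z; split.
- have [c c0 c_le] := integral_mix_lik_div_lb R k xs hk.
  apply: (@lt_le_trans _ _ (c%:E * pi0 setT)%E).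
    by rewrite probability_setT mule1 lte_fin.
  by apply: integral_ge_cst => [|t]; [exact: ltW | exact: c_le].
- have [C C0 le_C] := integral_mix_lik_div_ub R k xs hpos.
  apply: (@le_lt_trans _ _ (C%:E * pi0 setT)%E).
    apply: integral_le_cst => // t; rewrite le_C // andbT.
    by apply: integral_ge0; exact: mix_lik_div_ge0.
  by rewrite probability_setT mule1 ltry.
Qed.
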